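(* Let $n$ be a positive integer and let $i,j$ be integers with $1\leq i\leq j-2\leq n-2$. Then for all permutations $p$ of length $n$, $c_i(c_j(p))=c_j(c_i(p))$.
   Context: For a string $s$ of distinct integers with underlying set $S$, the complement of $s$ relative to $S$ is the string obtained from $s$ by replacing, for each $j$, the $j$th smallest element of $S$ by the $j$th largest element of $S$. For $1\leq i\leq n$, $c_i$ is the map on permutations $p=p_1p_2\cdots p_n$ of length $n$ that leaves $p_1\cdots p_{i-1}$ unchanged and replaces the string $p_ip_{i+1}\cdots p_n$ by its complement relative to its underlying set $\{p_i,\dots,p_n\}$. *)

From mathcomp Require Import all_boot.
Set Implicit Arguments. Unset Strict Implicit. Unset Printing Implicit Defensive.

(* Strings of distinct integers are represented as [seq nat]; a permutation of
   length n is a sequence p with [perm_eq p (iota 1 n)] (values 1..n).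
   Positions are 1-indexed as in the paper. *)

Definition rank_in (s : seq nat) (x : nat) : nat := count (fun y => y < x) s.

(* complement of s relative to its underlying set: the (r+1)-th smallest element
   is replaced by the (r+1)-th largest, i.e. the element of index
   (size s - 1 - r) in the increasing sort of s. *)
Definition complement (s : seq nat) : seq nat :=
  [seq nth 0 (sort leq s) (size s - 1 - rank_in s x) | x <- s].

Definition c (i : nat) (p : seq nat) : seq nat :=
  take (i - 1) p ++ complement (drop (i - 1) p).

Definition is_perm_of_length (n : nat) (p : seq nat) : bool := perm_eq p (iota 1 n).

From mathcomp Require Import all_boot zify.
Set Implicit Arguments. Unset Strict Implicit. Unset Printing Implicit Defensive.

(* On a duplicate-free string s, [complement s] relabels s by the unique
   order-reversing bijection [compl_at s] of its underlying set.  Two facts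
   drive the proof: [compl_at s] only depends on the underlying set of s, and
   complementing commutes with relabelling by any order-reversing map.  Write
   p = a ++ b ++ t with c_i acting on b ++ t and c_j on t, and let f be the
   order-reversing bijection of the set of b ++ t.  Both c_i (c_j p) and
   c_j (c_i p) then equal a ++ map f b ++ map f (complement t). *)

Lemma nhomo_ltn_inj_in (f : nat -> nat) (D : {pred nat}) :
  {in D &, {homo f : m n /~ m < n}} -> {in D &, injective f}.
Proof.
move=> f_dec x y xD yD fxy; apply: anti_leq.
by rewrite -(leq_nmono_in f_dec yD xD) -(leq_nmono_in f_dec xD yD) fxy leqnn.
Qed.

Definition compl_at (s : seq nat) (x : nat) : nat :=
  nth 0 (sort leq s) (size s - 1 - rank_in s x).

Lemma complementE (s : seq nat) : complement s = map (compl_at s) s.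
Proof. by []. Qed.

Section Rank.

Variable s : seq nat.

Lemma rank_in_le : {homo rank_in s : x y / x <= y}.
Proof. by move=> x y xy; apply: sub_count => z /= zx; apply: leq_trans zx xy. Qed.

Lemma rank_in_lt (x y : nat) : x \in s -> x < y -> rank_in s x < rank_in s y.
Proof.
move=> xs xy.
have le_count : count (fun z => z < x) s + count_mem x s <= count (fun z => z < y) s.
  elim: (s) => //= z s' IH.
  by case: (ltngtP z x) => zx /=; case: (ltnP z y) => zy; lia.
have : 0 < count_mem x s by rewrite -has_count has_pred1.
rewrite /rank_in; lia.
Qed.

Lemma rank_in_inj : {in s &, injective (rank_in s)}.
Proof.
move=> x y xs ys rxy.
by case: (ltngtP x y) => // [/(rank_in_lt xs) | /(rank_in_lt ys)]; rewrite rxy ltnn.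
Qed.

Lemma count_lt_gt_mem (x : nat) :
  count (fun y => y < x) s + count (fun y => x < y) s + count_mem x s = size s.
Proof. by elim: (s) => //= y s' <-; case: (ltngtP y x) => /=; lia. Qed.

Lemma rank_in_lt_size (x : nat) : x \in s -> rank_in s x < size s.
Proof.
move=> xs; have := count_lt_gt_mem x.
have : 0 < count_mem x s by rewrite -has_count has_pred1.
rewrite /rank_in; lia.
Qed.

Lemma rev_rank_in_lt_size (x : nat) : x \in s -> size s - 1 - rank_in s x < size s.
Proof. by move/rank_in_lt_size; lia. Qed.

Lemma count_gt_rank_in (x : nat) : uniq s -> x \in s ->
  count (fun y => x < y) s = size s - 1 - rank_in s x.
Proof.
move=> us xs; have := count_lt_gt_mem x.
by rewrite count_uniq_mem // xs /rank_in; lia.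
Qed.

End Rank.

Lemma perm_rank_in (s t : seq nat) : perm_eq s t -> rank_in s =1 rank_in t.
Proof. by move/permP => cnt x; rewrite /rank_in cnt. Qed.

Lemma count_lt_nth_sorted (t : seq nat) (k : nat) : sorted ltn t -> k < size t ->
  count (fun y => y < nth 0 t k) t = k.
Proof.
elim: t k => //= a t IH k st.
have a_lt := order_path_min ltn_trans st.
case: k => [_ | k ks] /=.
  rewrite ltnn; apply/eqP; rewrite -leqn0 leqNgt -has_count.
  by apply/hasPn => z /(allP a_lt) /= az; rewrite -leqNgt ltnW.
by rewrite (allP a_lt) ?mem_nth // IH // (path_sorted st).
Qed.

Lemma rank_in_nth_sort (s : seq nat) (k : nat) : uniq s -> k < size s ->
  rank_in s (nth 0 (sort leq s) k) = k.
Proof.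
move=> us ks; have s_sort : perm_eq s (sort leq s) by rewrite perm_sym perm_sort.
rewrite (perm_rank_in s_sort) /rank_in count_lt_nth_sorted //.
  by rewrite ltn_sorted_uniq_leq sort_uniq us (sort_sorted leq_total).
by rewrite size_sort.
Qed.

Section ComplAt.

Variable s : seq nat.
Hypothesis us : uniq s.

Lemma mem_compl_at (x : nat) : x \in s -> compl_at s x \in s.
Proof.
move=> xs; rewrite /compl_at -(mem_sort leq).
by apply: mem_nth; rewrite size_sort rev_rank_in_lt_size.
Qed.

Lemma rank_in_compl_at (x : nat) : x \in s ->
  rank_in s (compl_at s x) = size s - 1 - rank_in s x.
Proof. by move=> xs; rewrite /compl_at rank_in_nth_sort // rev_rank_in_lt_size. Qed.

Lemma compl_at_decreasing : {in s &, {homo compl_at s : x y /~ x < y}}.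
Proof.
move=> x y xs ys yx.
have rk_yx := rank_in_lt ys yx; have x_lt := rank_in_lt_size xs.
have rk_x := rank_in_compl_at xs; have rk_y := rank_in_compl_at ys.
by rewrite ltnNge; apply/negP => /(rank_in_le s); lia.
Qed.

Lemma perm_complement : perm_eq (complement s) s.
Proof.
have uc : uniq (complement s).
  by rewrite complementE (map_inj_in_uniq (nhomo_ltn_inj_in compl_at_decreasing)).
have sub : {subset complement s <= s} by move=> _ /mapP [x xs ->]; apply: mem_compl_at.
have [_ eq_s] := uniq_min_size uc sub (eq_leq (esym (size_map (compl_at s) s))).
exact: uniq_perm.
Qed.

End ComplAt.

Lemma compl_at_map (g : nat -> nat) (s : seq nat) (x : nat) : uniq s ->
  {in s &, {homo g : a b /~ a < b}} -> x \in s ->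
  compl_at (map g s) (g x) = g (compl_at s x).
Proof.
move=> us g_dec xs.
have ugs : uniq (map g s) by rewrite (map_inj_in_uniq (nhomo_ltn_inj_in g_dec)).
have rank_g z : z \in s -> rank_in (map g s) (g z) = size s - 1 - rank_in s z.
  move=> zs; rewrite /rank_in count_map -count_gt_rank_in //.
  by apply: eq_in_count => w ws /=; rewrite ltnNge (leq_nmono_in g_dec) // -ltnNge.
apply: (rank_in_inj (mem_compl_at (map_f g xs))); first exact/map_f/mem_compl_at.
by rewrite rank_in_compl_at ?map_f // !rank_g ?mem_compl_at // rank_in_compl_at // size_map.
Qed.

Lemma perm_compl_at (s t : seq nat) : perm_eq s t -> compl_at s =1 compl_at t.
Proof.
move=> st x; rewrite /compl_at (perm_rank_in st) (perm_size st).
by rewrite (perm_sortP leq_total leq_trans anti_leq _ _ st).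
Qed.

Lemma complement_map (g : nat -> nat) (s : seq nat) : uniq s ->
  {in s &, {homo g : a b /~ a < b}} ->
  complement (map g s) = map g (complement s).
Proof.
move=> us g_dec; rewrite !complementE -!map_comp.
by apply/eq_in_map => x xs /=; rewrite compl_at_map.
Qed.

Lemma complement_cat_complement (s t : seq nat) : uniq (s ++ t) ->
  complement (s ++ complement t) =
  map (compl_at (s ++ t)) s ++ complement (map (compl_at (s ++ t)) t).
Proof.
move=> ust; have ut : uniq t by move: ust; rewrite cat_uniq => /and3P [].
have perm_st : perm_eq (s ++ complement t) (s ++ t) by rewrite perm_cat2l perm_complement.
rewrite complementE (eq_map (perm_compl_at perm_st)) map_cat complement_map //.
by move=> x y xt yt; apply: compl_at_decreasing; rewrite // mem_cat ?xt ?yt orbT.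
Qed.

Lemma c_cat (i : nat) (s t : seq nat) : size s = i - 1 -> c i (s ++ t) = s ++ complement t.
Proof. by move=> sz; rewrite /c -sz take_size_cat // drop_size_cat. Qed.

Lemma c_oversize (i : nat) (p : seq nat) : size p <= i - 1 -> c i p = p.
Proof. by move=> sz; rewrite /c take_oversize // drop_oversize // cats0. Qed.

Lemma size_c (i : nat) (p : seq nat) : size (c i p) = size p.
Proof. by rewrite /c size_cat size_map -size_cat cat_take_drop. Qed.

Lemma c_comm_cat (i j : nat) (a b t : seq nat) : uniq (a ++ b ++ t) ->
  size a = i - 1 -> size (a ++ b) = j - 1 ->
  c i (c j (a ++ b ++ t)) = c j (c i (a ++ b ++ t)).
Proof.
move=> uabt sa sab; have ubt : uniq (b ++ t) by move: uabt; rewrite cat_uniq => /and3P [].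
rewrite catA (c_cat _ sab) -!catA !(c_cat _ sa) [complement (b ++ t)]complementE.
rewrite map_cat catA c_cat ?complement_cat_complement -?catA //.
by rewrite size_cat size_map -size_cat.
Qed.

Lemma c_comm (i j : nat) (p : seq nat) : uniq p -> i <= j -> c i (c j p) = c j (c i p).
Proof.
move=> up ij; have [jp | pj] := leqP (j - 1) (size p); last first.
  by rewrite [c j p]c_oversize ?[c j _]c_oversize ?size_c // ltnW.
set ab := take (j - 1) p; set a := take (i - 1) ab.
have sab : size ab = j - 1 by rewrite size_takel.
have sa : size a = i - 1 by rewrite size_takel // sab leq_sub2r.
have ep : p = a ++ drop (i - 1) ab ++ drop (j - 1) p by rewrite catA !cat_take_drop.
by rewrite ep c_comm_cat -?ep // cat_take_drop.
Qed.

Theorem mainTheorem2 (n i j : nat) :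
  0 < n -> 1 <= i -> i <= j - 2 -> j - 2 <= n - 2 ->
  forall p : seq nat, is_perm_of_length n p ->
    c i (c j p) = c j (c i p).
Proof.
move=> _ _ ij _ p pp; apply: c_comm; first by rewrite (perm_uniq pp) iota_uniq.
by apply: leq_trans ij _; rewrite leq_subr.
Qed.
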